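(* Let $K=3$. There exist a constant $c>0$ and, for infinitely many $T$, a sequence of outcomes $\mathbf x\in[3]^T$ and forecasts $\mathbf p\in\Delta_3^T$ such that $\mathrm{Cal}(\mathbf p^{(i)},\mathbf x^{(i)})=0$ for each $i\in\{1,2,3\}$, but $\mathrm{MaxAgentReg}(\mathbf p,\mathbf x)\ge cT$.
   Context: $\Delta_K$ is the probability simplex in $\mathbb R^K$, outcome $i$ identified with $e_i$. For $\mathbf p\in\Delta_K^T$, $\mathbf x\in[K]^T$ and $i\in[K]$, define the binary sequences $\mathbf p^{(i)}\in[0,1]^T$ by $p^{(i)}_t=(p_t)_i$ and $\mathbf x^{(i)}\in\{0,1\}^T$ by $x^{(i)}_t=\mathbf 1(x_t=i)$. Binary calibration error: for $\mathbf q\in[0,1]^T$, $\mathbf y\in\{0,1\}^T$, $\mathrm{Cal}(\mathbf q,\mathbf y)=\sum_q|q\,n_q-m_q|$ with $n_q=|\{t:q_t=q\}|$, $m_q=|\{t:q_t=q,y_t=1\}|$. A multiclass scoring rule $\ell:\Delta_K\times[K]\to\mathbb R$ with $\ell(p;q)=\sum_iq_i\ell(p,i)$ is proper if $\ell(p;p)\le\ell(p';p)$ for all $p,p'$; $\mathcal L$ is the set of proper ones with values in $[-1,1]$. With $\beta=\frac1T\sum_te_{x_t}$, $\mathrm{Reg}_\ell(\mathbf p,\mathbf x)=\sum_t\ell(p_t,x_t)-\sum_t\ell(\beta,x_t)$ and $\mathrm{MaxAgentReg}(\mathbf p,\mathbf x)=\sup_{\ell\in\mathcal L}\mathrm{Reg}_\ell(\mathbf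 p,\mathbf x)$. *)

From HB Require Import structures.
From mathcomp Require Import all_boot all_order all_algebra.
From mathcomp Require Import classical_sets reals.
Set Implicit Arguments. Unset Strict Implicit. Unset Printing Implicit Defensive.
Import Order.TTheory GRing.Theory Num.Theory.
Local Open Scope ring_scope.
Local Open Scope classical_set_scope.

Section Defs.
Variable R : realType.

Definition in_simplex (K : nat) (p : 'I_K -> R) : Prop :=
  (forall i, 0 <= p i) /\ \sum_(i < K) p i = 1.

Definition Cal (T : nat) (q : 'I_T -> R) (y : 'I_T -> bool) : R :=
  \sum_(v <- undup [seq q t | t <- enum 'I_T])
     `| v * (#|[set t | q t == v]|)%:R - (#|[set t | (q t == v) && y t]|)%:R |.

Definition exp_score (K : nat) (l : ('I_K -> R) -> 'I_K -> R) (p q : 'I_K -> R) : R :=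
  \sum_(i < K) q i * l p i.

Definition bounded_proper (K : nat) (l : ('I_K -> R) -> 'I_K -> R) : Prop :=
  (forall p, in_simplex p -> forall i, -1 <= l p i <= 1) /\
  (forall p p', in_simplex p -> in_simplex p' -> exp_score l p p <= exp_score l p' p).

Definition beta (K T : nat) (x : 'I_T -> 'I_K) : 'I_K -> R :=
  fun i => (#|[set t | x t == i]|)%:R / T%:R.

Definition Reg (K T : nat) (l : ('I_K -> R) -> 'I_K -> R)
  (p : 'I_T -> 'I_K -> R) (x : 'I_T -> 'I_K) : R :=
  \sum_(t < T) l (p t) (x t) - \sum_(t < T) l (beta x) (x t).

Definition MaxAgentReg (K T : nat) (p : 'I_T -> 'I_K -> R) (x : 'I_T -> 'I_K) : R :=
  sup [set r | exists l, bounded_proper l /\ r = Reg l p x].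

End Defs.

From HB Require Import structures.
From mathcomp Require Import all_boot all_order all_algebra.
From mathcomp Require Import classical_sets reals.
From mathcomp.algebra_tactics Require Import ring lra.
Import Order.TTheory GRing.Theory Num.Theory.
Local Open Scope ring_scope.
Set Implicit Arguments. Unset Strict Implicit.

(* The forecasts repeat n times each of the three rounds "outcome j, forecast
   uniform on {j, j+1}" (indices in 'I_3, so j + 1 is taken mod 3).  Each
   coordinate is calibrated: the value 1/2 is issued 2n times and is right n
   times, the value 0 is never right.  An agent who picks the cheapest loss
   vector from the menu {0, A_0, A_1, A_2}, with A_j equal to 1/2 on j, -1 on
   j+1 and 1 on j+2, uses a proper scoring rule bounded by 1.  Against the
   forecast for outcome j it picks A_j (expected loss -1/4 versus 3/4, 0, 0)
   and pays 1/2; against the empirical distribution, which is uniform, every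
   A_j costs 1/6 > 0, so it picks 0 and pays nothing.  The regret is therefore
   T/2. *)

Section MenuRule.
Variables (R : realType) (K : nat).

Definition expected_loss (p u : 'I_K -> R) : R := \sum_(i < K) p i * u i.

Variables (J : finType) (j0 : J) (menu : J -> 'I_K -> R).

Definition menu_rule (p : 'I_K -> R) : 'I_K -> R :=
  menu [arg min_(j < j0) expected_loss p (menu j)]%O.

Lemma menu_rule_min p j :
  expected_loss p (menu_rule p) <= expected_loss p (menu j).
Proof. by rewrite /menu_rule; case: arg_minP => // k _; apply. Qed.

Lemma menu_rule_eq p j :
  (forall k, k != j -> expected_loss p (menu j) < expected_loss p (menu k)) ->
  menu_rule p = menu j.
Proof.
rewrite /menu_rule; case: arg_minP => // k _ k_min j_min.
have [-> // | k_neq_j] := eqVneq k j.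
by have := j_min k k_neq_j; rewrite ltNge k_min.
Qed.

Lemma menu_rule_bounded_proper :
  (forall j i, -1 <= menu j i <= 1) -> bounded_proper menu_rule.
Proof.
move=> menu_bounded; split=> [p _ i | p p' _ _]; first exact: menu_bounded.
exact: menu_rule_min.
Qed.

End MenuRule.

Arguments menu_rule_eq {R K J j0 menu p} j.

Lemma natr_card_set (R : realType) (I : finType) (P : pred I) :
  (#|[set i | P i]%classic|)%:R = \sum_i (P i)%:R :> R.
Proof.
rewrite -sumr_const big_mkcond; apply: eq_bigr => i _.
by rewrite /in_mem /= /in_set boolp.asboolb; case: (P i).
Qed.

Section Regret.
Variables (R : realType) (K T : nat).
Implicit Types (x : 'I_T -> 'I_K) (p : 'I_T -> 'I_K -> R).

Lemma beta_simplex x : (0 < T)%N -> in_simplex (@beta R K T x).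
Proof.
move=> T_gt0; split=> [i | ]; first by rewrite /beta divr_ge0.
have outcome_once t : \sum_(i < K) (x t == i)%:R = 1 :> R.
  rewrite (bigD1 (x t)) //= eqxx big1 ?addr0 // => i.
  by rewrite eq_sym => /negbTE ->.
rewrite /beta -mulr_suml.
under eq_bigr do rewrite natr_card_set.
rewrite exchange_big /=.
under eq_bigr do rewrite outcome_once.
by rewrite sumr_const card_ord divff // pnatr_eq0 -lt0n.
Qed.

Lemma Reg_le_MaxAgentReg l p x :
  (0 < T)%N -> (forall t, in_simplex (p t)) -> bounded_proper l ->
  Reg l p x <= MaxAgentReg p x.
Proof.
move=> T_gt0 p_simplex l_proper; apply: ub_le_sup; last by exists l.
exists (T%:R *+ 2) => _ [l' [[l'_bounded _] ->]].
have forecast_loss_le : \sum_(t < T) l' (p t) (x t) <= T%:R.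
  rewrite -[T in T%:R]card_ord -sumr_const; apply: ler_sum => t _.
  by case/andP: (l'_bounded _ (p_simplex t) (x t)).
have benchmark_loss_ge : - T%:R <= \sum_(t < T) l' (beta R x) (x t).
  rewrite -[T in T%:R]card_ord -sumr_const -sumrN; apply: ler_sum => t _.
  by case/andP: (l'_bounded _ (beta_simplex x T_gt0) (x t)).
rewrite /Reg; lra.
Qed.

Lemma Cal_eq0 (q : 'I_T -> R) (y : 'I_T -> bool) :
  (forall t, q t * \sum_s (q s == q t)%:R = \sum_s ((q s == q t) && y s)%:R) ->
  Cal q y = 0.
Proof.
move=> calibrated; rewrite /Cal big1_seq // => v /andP[_].
rewrite mem_undup => /mapP[t _ ->].
by rewrite !natr_card_set calibrated subrr normr0.
Qed.

End Regret.

Section ThreeOutcomes.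
Variable R : realType.
Implicit Types (i j : 'I_3) (n : nat).

Lemma sum_ord3 (f : 'I_3 -> R) : \sum_(i < 3) f i = f 0 + f 1 + f 2.
Proof.
rewrite !big_ord_recl big_ord0 addr0 addrA.
by congr (f _ + f _ + f _); apply: val_inj.
Qed.

Definition cyclic_loss j : 'I_3 -> R :=
  fun i => if i == j then 1/2 else if i == j + 1 then -1 else 1.

Definition cyclic_menu (o : option 'I_3) : 'I_3 -> R :=
  if o is Some j then cyclic_loss j else fun=> 0.

Definition cyclic_rule : ('I_3 -> R) -> 'I_3 -> R := menu_rule None cyclic_menu.

Definition pair_forecast j : 'I_3 -> R :=
  fun i => if (i == j) || (i == j + 1) then 1/2 else 0.

Definition uniform : 'I_3 -> R := fun=> 1/3.

Lemma cyclic_rule_bounded_proper : bounded_proper cyclic_rule.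
Proof.
apply: menu_rule_bounded_proper => -[j|] i /=; last by apply/andP; split; lra.
rewrite /cyclic_loss; case: ifP => _; last case: ifP => _; apply/andP; split; lra.
Qed.

Lemma cyclic_rule_pair_forecast j : cyclic_rule (pair_forecast j) = cyclic_loss j.
Proof.
apply: (menu_rule_eq (Some j)) => -[k|] k_neq_j;
  rewrite /expected_loss !sum_ord3 /pair_forecast /= /cyclic_loss;
  case: j k_neq_j => [[|[|[|//]]] ?]; try case: k => [[|[|[|//]]] ?];
  rewrite //= => _; lra.
Qed.

Lemma cyclic_rule_uniform : cyclic_rule uniform = fun=> 0.
Proof.
apply: (menu_rule_eq None) => -[k|] // _.
rewrite /expected_loss !sum_ord3 /uniform /= /cyclic_loss.
case: k => [[|[|[|//]]] ?] /=; lra.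
Qed.

Lemma pair_forecast_simplex j : in_simplex (pair_forecast j).
Proof.
split=> [i | ]; first by rewrite /pair_forecast; case: ifP => _; lra.
by rewrite sum_ord3 /pair_forecast; case: j => [[|[|[|//]]] ?] /=; lra.
Qed.

Lemma pair_forecast_calibrated i j :
  pair_forecast j i * \sum_k (pair_forecast k i == pair_forecast j i)%:R =
  \sum_k ((pair_forecast k i == pair_forecast j i) && (k == i))%:R.
Proof.
have half_neq0 : ((1/2 : R) == 0) = false by rewrite mul1r invr_eq0 pnatr_eq0.
have zero_neq_half : ((0 : R) == 1/2) = false by rewrite eq_sym.
rewrite !sum_ord3 /pair_forecast.
by case: i => [[|[|[|//]]] ?]; case: j => [[|[|[|//]]] ?];
  rewrite /= ?eqxx ?half_neq0 ?zero_neq_half /=; lra.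
Qed.

Definition block_outcome n (t : 'I_(n + n + n)) : 'I_3 :=
  if (t < n)%N then 0 else if (t < n + n)%N then 1 else 2.

Lemma sum_block_outcome n (h : 'I_3 -> R) :
  \sum_(t < n + n + n) h (block_outcome t) = n%:R * \sum_(i < 3) h i.
Proof.
transitivity (\sum_(t < n) h 0 + \sum_(t < n) h 1 + \sum_(t < n) h 2).
  rewrite !big_split_ord /=.
  congr (_ + _ + _); apply: eq_bigr => t _; rewrite /block_outcome /=.
- by rewrite ltn_ord.
- by rewrite ltnNge leq_addr ltn_add2l ltn_ord.
- by rewrite -addnA ltnNge leq_addr ltn_add2l ltnNge leq_addr.
by rewrite !sumr_const card_ord sum_ord3 mulr_natl !mulrnDl.
Qed.

Lemma beta_block_outcome n : (0 < n)%N -> beta R (@block_outcome n) = uniform.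
Proof.
move=> n_gt0; apply: boolp.funext => i.
rewrite /beta natr_card_set (sum_block_outcome n (fun j => (j == i)%:R)).
have n_pos : 0 < n%:R :> R by rewrite ltr0n.
rewrite sum_ord3 !natrD /uniform.
by case: i => [[|[|[|//]]] ?] /=; field; apply: lt0r_neq0; lra.
Qed.

Definition block_forecast n (t : 'I_(n + n + n)) : 'I_3 -> R :=
  pair_forecast (block_outcome t).

Lemma Reg_cyclic_rule_block n : (0 < n)%N ->
  Reg cyclic_rule (@block_forecast n) (@block_outcome n) = n%:R * (3/2).
Proof.
move=> n_gt0; rewrite /Reg beta_block_outcome // cyclic_rule_uniform big1_eq.
rewrite (sum_block_outcome n (fun j => cyclic_rule (pair_forecast j) j)).
by rewrite sum_ord3 !cyclic_rule_pair_forecast /cyclic_loss /=; lra.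
Qed.

Lemma Cal_block_forecast n i :
  Cal (fun t => @block_forecast n t i) (fun t => block_outcome t == i) = 0.
Proof.
apply: Cal_eq0 => t.
rewrite (sum_block_outcome n (fun k => (pair_forecast k i == block_forecast t i)%:R))
  (sum_block_outcome n
     (fun k => ((pair_forecast k i == block_forecast t i) && (k == i))%:R)).
by rewrite mulrCA pair_forecast_calibrated.
Qed.

End ThreeOutcomes.

Theorem theorem5p5 (R : realType) :
  exists c : R, 0 < c /\
    forall N : nat, exists T : nat, (N <= T)%N /\
      exists (x : 'I_T -> 'I_3) (p : 'I_T -> 'I_3 -> R),
        (forall t, in_simplex (p t)) /\
        (forall i : 'I_3, Cal (fun t => p t i) (fun t => x t == i) = 0) /\
        c * T%:R <= MaxAgentReg p x.
Proof.
exists (1/2); split=> [|N]; first lra.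
pose n := N.+1.
exists (n + n + n)%N; split.
  by apply: leq_trans (leqnSn N) _; rewrite -addnA leq_addr.
have T_gt0 : (0 < n + n + n)%N by [].
have forecast_simplex t : in_simplex (@block_forecast R n t).
  exact: pair_forecast_simplex.
exists (@block_outcome n), (@block_forecast R n).
split=> //; split=> [i | ]; first exact: Cal_block_forecast.
apply: le_trans _
  (Reg_le_MaxAgentReg _ T_gt0 forecast_simplex (cyclic_rule_bounded_proper R)).
by rewrite Reg_cyclic_rule_block // !natrD; lra.
Qed.
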